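(* Assume only upper-bound group constraints, i.e. $\mathcal S=\{r:\ |\{u\in C_k: r(u)\le i\}|\le u_i^k\ \forall i\in[n],k\in[t]\}\neq\emptyset$. Let $F$ be a maxmin-fair distribution over $\mathcal S$ for satisfaction $A=V$. Then $F$ is generalized Lorenz-dominant: for every probability distribution $D$ over $\mathcal S$ and every $m\in[n]$, $$\sum_{j=1}^m D_{(j)}\ \le\ \sum_{j=1}^m F_{(j)},$$ where $D_{(j)}$ denotes the $j$-th smallest value among $(D[u])_{u\in\mathcal U}$.
   Context: Ranking setting: $\mathcal U=\{u_1,\dots,u_n\}$ is a finite set of $n$ individuals, partitioned into groups $C_1,\dots,C_t$. $R:\mathcal U\to\mathbb R$ is a relevance function with pairwise distinct values. A ranking is a bijection $r:\mathcal U\to[n]$. The value function is $V(r,u)=f(r(u))-g(u)$, where $f:[n]\to\mathbb R$ is non-increasing and $g:\mathcal U\to\mathbb R$ satisfies $R(u)\ge R(v)\Rightarrow g(u)\ge g(v)$. The upper bounds $u_i^k$ are integers. Maxmin-fairness: for a finite nonempty set $\mathcal S$ of solutions, a finite set $\mathcal U$ and $A:\mathcal S\times\mathcal U\to\mathbb R$, for a probability distribution $D$ over $\mathcal S$ write $D[u]=\mathbb E_{S\sim D}[A(S,u)]$. A distribution $F$ over $\mathcal S$ is maxmin-fair if for every distribution $D$ over $\mathcal S$ and every $u\in\mathcal U$: if $D[u]>F[u]$ then there exists $v\in\mathcal U$ with $D[v]<F[v]\le F[u]$. *)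

From HB Require Import structures.
From mathcomp Require Import all_boot all_order all_algebra all_fingroup.
From mathcomp Require Import reals.
Set Implicit Arguments. Unset Strict Implicit. Unset Printing Implicit Defensive.
Import Order.TTheory GRing.Theory Num.Theory.
Local Open Scope ring_scope.

(* Individuals u_1..u_n are the elements of 'I_n.  A ranking is a bijection
   U -> [n]; we represent it by r : {perm 'I_n}, the rank of u being
   (r u).+1 \in {1,..,n}.  Groups: grp u = k means u \in C_k (k : 'I_t). *)

Definition rnk n (r : {perm 'I_n}) (u : 'I_n) : nat := (val (r u)).+1.

Definition feasible n t (grp : 'I_n -> 'I_t) (ub : nat -> 'I_t -> int)
  (r : {perm 'I_n}) : bool :=
  [forall i : 'I_n, forall k : 'I_t,
     (#|[set u | (grp u == k) && (rnk r u <= i.+1)%N]|%:Z <= ub i.+1 k)].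

Definition Vfun (R : realType) n (f : nat -> R) (g : 'I_n -> R)
  (r : {perm 'I_n}) (u : 'I_n) : R := f (rnk r u) - g u.

Definition is_distr (R : realType) (Sol : finType) (S : pred Sol)
  (D : {ffun Sol -> R}) : Prop :=
  [/\ forall s, 0 <= D s, \sum_s D s = 1 & forall s, ~~ S s -> D s = 0].

Definition expA (R : realType) (Sol U : finType) (A : Sol -> U -> R)
  (D : {ffun Sol -> R}) (u : U) : R := \sum_s D s * A s u.

Definition maxmin_fair (R : realType) (Sol U : finType) (S : pred Sol)
  (A : Sol -> U -> R) (F : {ffun Sol -> R}) : Prop :=
  is_distr S F /\
  forall D, is_distr S D -> forall u : U,
    expA A F u < expA A D u ->
    exists v : U, expA A D v < expA A F v /\ expA A F v <= expA A F u.

Definition lorenz_sum (R : realType) (Sol U : finType) (A : Sol -> U -> R)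
  (D : {ffun Sol -> R}) (m : nat) : R :=
  let s := sort <=%R [seq expA A D u | u <- enum U] in
  \sum_(j < m) nth 0 s j.

From HB Require Import structures.
From mathcomp Require Import all_boot all_order all_algebra all_fingroup.
From mathcomp Require Import reals.
From mathcomp Require Import zify lra.
Set Implicit Arguments. Unset Strict Implicit. Unset Printing Implicit Defensive.
Import Order.TTheory GRing.Theory Num.Theory.

(* Fix a set [S] of individuals.  A feasible ranking is
      locally optimal for [S] if no feasible transposition moves a member of
      [S] ahead of a non-member.  From every feasible [r] one reaches such a
      ranking [improve S r] that places every member of [S] no later than
      [r] does (minimise the total position of [S]); and a locally optimal
      ranking has, in every prefix, at least as many members of [S] as any
      feasible ranking.  By Abel summation ([f] is non-increasing) it
      therefore maximises the total value of [S].
   2. Fairness.  For a set [X] closed downwards for the values of [F], the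
      image of [F] under [improve X] dominates [F] on [X]; maxmin-fairness
      forces equality on [X], so [F] maximises the expected value of [X].
   3. Lorenz dominance follows from optimality on the level sets
      [{F < c}] and [{F <= c}] of the [m]-th smallest value [c], by a chord
      (mean-value) argument for the values equal to [c]. *)

Section Rankings.
Variables (n t : nat) (grp : 'I_n -> 'I_t) (ub : nat -> 'I_t -> int).

Definition cnt (r : {perm 'I_n}) (k : 'I_t) (j : nat) : nat :=
  \sum_x ((grp x == k) && (r x < j)).

Lemma card_prefix_group (r : {perm 'I_n}) k j :
  #|[set u | (grp u == k) && (rnk r u <= j)]| = cnt r k j.
Proof.
rewrite -sum1dep_card big_mkcond; apply: eq_bigr => x _.
by case: (_ && _).
Qed.

Lemma feasibleP r :
  reflect (forall j k, (0 < j <= n)%N -> ((cnt r k j)%:Z <= ub j k)%R)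
          (feasible grp ub r).
Proof.
apply: (iffP forallP) => [H [|j] k // /andP[_ jn]|H i].
  by have /forallP := H (Ordinal jn); rewrite -card_prefix_group.
by apply/forallP => k; have := H i.+1 k (ltn_ord i); rewrite -card_prefix_group.
Qed.

Lemma cnt_swap (r : {perm 'I_n}) u w k j : u != w ->
  (cnt (tperm u w * r) k j + ((grp w == k) && (r w < j))
     + ((grp u == k) && (r u < j)) =
   cnt r k j + ((grp w == k) && (r u < j)) + ((grp u == k) && (r w < j)))%N.
Proof.
move=> uw; have wu : w != u by rewrite eq_sym.
have -> : cnt (tperm u w * r) k j =
          (\sum_x ((grp (tperm u w x) == k) && (r x < j)))%N.
  rewrite /cnt (reindex_inj (@perm_inj _ (tperm u w))) /=.
  by apply: eq_bigr => x _; rewrite permM tpermK.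
rewrite /cnt (bigD1 u) // (bigD1 w) //= tpermL tpermR.
rewrite [\sum_x _](bigD1 u) //= [\sum_(i | i != u) _](bigD1 w) //=.
set A := (\sum_(i | _) _)%N; set B := (\sum_(i | _) _)%N.
suff -> : A = B by lia.
by apply: eq_bigr => x /andP[xu xw]; rewrite tpermD // eq_sym.
Qed.

Lemma cnt_swap_le (r : {perm 'I_n}) u w k j : (r u < r w)%N ->
  (cnt (tperm u w * r) k j <=
   cnt r k j + [&& grp w == k, grp u != k & r u < j <= r w])%N.
Proof.
move=> ruw; have uw : u != w by apply: contraTneq ruw => ->; rewrite ltnn.
have := cnt_swap r k j uw.
move: (cnt _ k j) (cnt r k j) => c' c.
case: (grp w == k); case: (grp u == k) => /=;
case: (ltnP (r u) j); case: (ltnP (r w) j) => /=; lia.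
Qed.

Lemma swap_same_group_feasible (r : {perm 'I_n}) u w :
  feasible grp ub r -> grp u = grp w -> feasible grp ub (tperm u w * r).
Proof.
move=> /feasibleP Fr g_uw; apply/feasibleP => j k jn.
case: (eqVneq u w) => [->|uw]; first by rewrite tperm1 mul1g; apply: Fr.
have /eqP := cnt_swap r k j uw; rewrite g_uw addnAC !eqn_add2r => /eqP ->.
exact: Fr.
Qed.

Lemma swap_feasible (r : {perm 'I_n}) u w :
  feasible grp ub r -> (r u < r w)%N -> grp u != grp w ->
  (forall j, (r u < j <= r w)%N -> ((cnt r (grp w) j).+1%:Z <= ub j (grp w))%R) ->
  feasible grp ub (tperm u w * r).
Proof.
move=> /feasibleP Fr ruw guw slack; apply/feasibleP => j k jn.
have := cnt_swap_le k j ruw.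
case: (boolP [&& grp w == k, grp u != k & r u < j <= r w]).
  move=> /and3P[/eqP <- _ jw] le_cnt.
  by apply: le_trans (slack j jw); rewrite lez_nat -addn1.
by rewrite addn0 => _ le_cnt; apply: le_trans (Fr j k jn); rewrite lez_nat.
Qed.
End Rankings.

Section Domination.
Variables (n t : nat) (grp : 'I_n -> 'I_t) (ub : nat -> 'I_t -> int).
Variable S : {set 'I_n}.

Local Notation feasible := (feasible grp ub).

Definition pcnt (r : {perm 'I_n}) (j : nat) : nat := \sum_(x in S) (r x < j).
Definition gpcnt (r : {perm 'I_n}) (k : 'I_t) (j : nat) : nat :=
  \sum_(x in S | grp x == k) (r x < j).

Definition locopt (r : {perm 'I_n}) : Prop :=
  forall u w, u \notin S -> w \in S -> (r u < r w)%N -> ~~ feasible (tperm u w * r).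

(* In a locally optimal ranking, members of [S] precede the non-members of
   their own group, since exchanging them is always feasible. *)
Lemma locopt_group_order r : feasible r -> locopt r ->
  forall x w, x \notin S -> w \in S -> grp x = grp w -> (r w < r x)%N.
Proof.
move=> Fr Lr x w xS wS gxw; rewrite ltnNge leq_eqVlt negb_or; apply/andP; split.
  by apply: contraNneq xS => /val_inj/perm_inj ->.
by apply/negP => lt_xw; have := Lr x w xS wS lt_xw; rewrite swap_same_group_feasible.
Qed.

Definition improve (r : {perm 'I_n}) : {perm 'I_n} :=
  [arg min_(r' < r | feasible r' && [forall w in S, (r' w <= r w)%N])
     \sum_(w in S) val (r' w)].

Lemma improve_spec r : feasible r ->
  [/\ feasible (improve r), (forall w, w \in S -> (improve r w <= r w)%N)
    & locopt (improve r)].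
Proof.
move=> Fr; rewrite /improve.
have Pr : feasible r && [forall w in S, (r w <= r w)%N].
  by rewrite Fr; apply/forall_inP.
case: arg_minnP => // r' /andP[Fr' /forall_inP le_r'] min_r'.
split => // u w uS wS ruw; apply/negP => Fs.
have uw : u != w by apply: contraNneq uS => ->.
have fixS x : x \in S -> x != w -> (tperm u w * r')%g x = r' x.
  move=> xS xw; rewrite permM tpermD 1?eq_sym //.
  by apply: contraNneq uS => <-.
have rs_w : (tperm u w * r')%g w = r' u by rewrite permM tpermR.
have /min_r' : feasible (tperm u w * r') &&
               [forall x in S, ((tperm u w * r')%g x <= r x)%N].
  rewrite Fs; apply/forall_inP => x xS; case: (eqVneq x w) => [->|xw].
    by rewrite rs_w (leq_trans (ltnW ruw)) ?le_r'.
  by rewrite fixS ?le_r'.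
rewrite leqNgt => /negP; apply.
rewrite (bigD1 w) //= [X in (_ < X)%N](bigD1 w) //= rs_w.
rewrite (eq_bigr (fun x => val (r' x))) ?ltn_add2r //.
by move=> x /andP[xS xw]; rewrite fixS.
Qed.

Lemma pcnt_le_card r j : (pcnt r j <= #|S|)%N.
Proof. by rewrite /pcnt -sum1_card; apply: leq_sum => x _; case: (_ < _)%N. Qed.

Lemma pcnt_full r j : (n <= j)%N -> pcnt r j = #|S|.
Proof.
move=> nj; rewrite /pcnt -sum1_card; apply: eq_bigr => x _.
by rewrite (leq_trans (ltn_ord (r x)) nj).
Qed.

Lemma pcnt_succ r j (jn : (j < n)%N) :
  pcnt r j.+1 = (pcnt r j + ((r^-1)%g (Ordinal jn) \in S))%N.
Proof.
have at_j x : (x == (r^-1)%g (Ordinal jn)) = (val (r x) == j).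
  apply/eqP/eqP => [->|E]; first by rewrite permKV.
  by apply: (@perm_inj _ r); rewrite permKV; apply: val_inj.
rewrite /pcnt (eq_bigr (fun x => (r x < j) + (x == (r^-1)%g (Ordinal jn))))%N; last first.
  by move=> x _; rewrite at_j ltnS leq_eqVlt; case: ltngtP.
rewrite big_split /=; congr (_ + _)%N.
case: (boolP ((r^-1)%g (Ordinal jn) \in S)) => H.
  by rewrite (bigD1 _ H) /= eqxx big1 // => x /andP[_ /negbTE ->].
by apply: big1 => x xS; case: eqP => // E; move: H; rewrite -E xS.
Qed.

Lemma pcnt_groups r j : pcnt r j = (\sum_k gpcnt r k j)%N.
Proof. exact: (partition_big grp predT). Qed.

Lemma cnt_mono r k j j' : (j <= j')%N -> (cnt grp r k j <= cnt grp r k j')%N.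
Proof.
move=> jj; apply: leq_sum => x _; case: (grp x == k) => //=.
by case H: (_ < j)%N => //=; rewrite (leq_trans H jj).
Qed.

Lemma gpcnt_le_cnt r k j : (gpcnt r k j <= cnt grp r k j)%N.
Proof.
rewrite /gpcnt /cnt big_mkcond /=; apply: leq_sum => x _.
by case: (x \in S); case: (grp x == k).
Qed.

Lemma locopt_cnt_gap r k w j j' : feasible r -> locopt r ->
  w \in S -> grp w = k ->
  (forall x, x \in S -> grp x = k -> (j < r x)%N -> (r w <= r x)%N) ->
  (j < j' <= r w)%N -> cnt grp r k j' = gpcnt r k j.+1.
Proof.
move=> Fr Lr wS gw w_first /andP[jj' j'w].
rewrite /gpcnt /cnt [RHS]big_mkcond [RHS]big_mkcond /=.
apply: eq_bigr => x _; case: (eqVneq (grp x) k) => gx; rewrite ?andbF //=.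
have S_before_w : (r x < r w)%N -> x \in S.
  apply: contraTT => xS; rewrite -leqNgt ltnW //.
  by apply: locopt_group_order => //; rewrite gx.
case: (ltnP (r x) j.+1) => [xj | jx].
  by rewrite S_before_w ?(leq_trans xj) ?(leq_trans jj').
have [x_w|] := ltnP (r x) j'; last by case: (x \in S).
have xS := S_before_w (leq_trans x_w j'w).
by have := w_first x xS gx jx; rewrite leqNgt (leq_trans x_w j'w).
Qed.

(* Otherwise some group [k] has more members of [S] early in [r2]; exchanging
   the non-member at position [j] of [r] with the next member of [S] in group
   [k] would then be feasible, contradicting local optimality. *)
Lemma locopt_step r r2 j : feasible r -> locopt r -> feasible r2 ->
  (pcnt r2 j <= pcnt r j)%N -> (pcnt r2 j.+1 <= pcnt r j.+1)%N.
Proof.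
move=> Fr Lr Fr2 not_ahead.
have [nj|jn] := leqP n j; first by rewrite (pcnt_full r (leqW nj)) pcnt_le_card.
rewrite leqNgt; apply/negP => ahead.
set u := (r^-1)%g (Ordinal jn); have ru : val (r u) = j by rewrite permKV.
have uS : u \notin S.
  by apply/negP => uS; move: ahead; rewrite !pcnt_succ -/u uS; lia.
have [k ahead_k] : exists k, (gpcnt r k j.+1 < gpcnt r2 k j.+1)%N.
  apply/existsP; move: ahead; apply: contraLR; rewrite negb_exists => /forallP H.
  by rewrite -leqNgt !pcnt_groups; apply: leq_sum => k _; rewrite leqNgt H.
pose late_k x := [&& x \in S, grp x == k & (j < r x)%N].
have [w0 Pw0] : exists w, late_k w.
  apply/existsP; move: ahead_k; apply: contraLR; rewrite negb_exists.
  move=> /forallP late; rewrite -leqNgt /gpcnt.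
  apply: (@leq_trans (\sum_(x in S | grp x == k) 1)%N).
    by apply: leq_sum => x _; case: (_ < _)%N.
  apply: leq_sum => x /andP[xS gx]; move: (late x).
  by rewrite /late_k xS gx /= -ltnNge => ->.
case: (@arg_minnP _ w0 late_k (fun x => val (r x)) Pw0).
move=> w /and3P[wS /eqP gw jw] w_first.
have w_first' x : x \in S -> grp x = k -> (j < r x)%N -> (r w <= r x)%N.
  by move=> xS gx jx; apply: w_first; rewrite /late_k xS gx eqxx.
have guw : grp u != grp w.
  apply/eqP => guw; have := locopt_group_order Fr Lr uS wS guw.
  by rewrite ru ltnNge ltnW.
have := Lr u w uS wS; rewrite ru => /(_ jw) /negP; apply.
apply: swap_feasible => //; first by rewrite ru.
rewrite ru gw => j' jj'w.
rewrite (locopt_cnt_gap Fr Lr wS gw w_first' jj'w).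
have /feasibleP Fr2' := Fr2; case/andP: jj'w => jj' j'w.
apply: le_trans (Fr2' j' k _); last first.
  by have := ltn_ord (r w); lia.
rewrite lez_nat; apply: leq_trans (cnt_mono r2 k jj').
exact: leq_trans ahead_k (gpcnt_le_cnt r2 k j.+1).
Qed.

Lemma locopt_dom r r2 : feasible r -> locopt r -> feasible r2 ->
  forall j, (pcnt r2 j <= pcnt r j)%N.
Proof.
move=> Fr Lr Fr2; elim=> [|j IH]; first by rewrite /pcnt !big1.
exact: locopt_step.
Qed.
End Domination.

Local Open Scope ring_scope.

Section Abel.
Variables (R : realType) (n : nat) (f : nat -> R).
Hypothesis f_noninc :
  forall i j : nat, (1 <= i)%N -> (i <= j)%N -> (j <= n)%N -> f j <= f i.

Lemma f_telescope p : (p < n)%N ->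
  f p.+1 = f n + \sum_(1 <= j < n) ((p < j)%N%:R * (f j - f j.+1)).
Proof.
move=> pn; rewrite (@big_cat_nat _ _ _ p.+1) //= big_nat_cond big1 ?add0r.
  rewrite big_nat_cond.
  under eq_bigr => j /andP[/andP[pj _] _] do rewrite pj mul1r.
  rewrite -big_nat_cond.
  have -> : \sum_(p.+1 <= j < n) (f j - f j.+1) =
            - \sum_(p.+1 <= j < n) (f j.+1 - f j).
    by rewrite -sumrN; apply: eq_bigr => j _; rewrite opprB.
  by rewrite telescope_sumr // opprB addrC subrK.
by move=> j /andP[/andP[_ jp] _]; rewrite ltnNge -ltnS jp mul0r.
Qed.

Lemma sum_f_pcnt (S : {set 'I_n}) (r : {perm 'I_n}) :
  \sum_(w in S) f (rnk r w) =
  #|S|%:R * f n + \sum_(1 <= j < n) (f j - f j.+1) * (pcnt S r j)%:R.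
Proof.
under eq_bigr => w _ do rewrite /rnk (f_telescope (ltn_ord (r w))).
rewrite big_split /= sumr_const mulr_natl; congr (_ + _).
rewrite exchange_big /=; apply: eq_bigr => j _.
by rewrite /pcnt natr_sum mulr_sumr; apply: eq_bigr => w _; rewrite mulrC.
Qed.

Lemma pcnt_dom_sum_f (S : {set 'I_n}) (r r2 : {perm 'I_n}) :
  (forall j, (pcnt S r2 j <= pcnt S r j)%N) ->
  \sum_(w in S) f (rnk r2 w) <= \sum_(w in S) f (rnk r w).
Proof.
move=> dom; rewrite !sum_f_pcnt lerD2l; apply: ler_sum_nat => j /andP[j1 jn].
by rewrite ler_wpM2l ?subr_ge0 ?f_noninc ?ler_nat.
Qed.
End Abel.

Definition down_closed (R : realType) (T : finType) (y : T -> R) (X : {set T}) :=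
  forall u v, u \in X -> y v <= y u -> v \in X.

Section MaxminFair.
Variables (R : realType) (Sol U : finType) (S : pred Sol) (A : Sol -> U -> R).

Definition push (T : Sol -> Sol) (D : {ffun Sol -> R}) : {ffun Sol -> R} :=
  [ffun s => \sum_(r | T r == s) D r].

Lemma push_expect T D (G : Sol -> R) :
  \sum_s push T D s * G s = \sum_r D r * G (T r).
Proof.
rewrite [RHS](partition_big T predT) //=; apply: eq_bigr => s _.
by rewrite ffunE mulr_suml; apply: eq_bigr => r /eqP ->.
Qed.

Lemma expect_mono D (h1 h2 : Sol -> R) : is_distr S D ->
  (forall s, S s -> h1 s <= h2 s) -> \sum_s D s * h1 s <= \sum_s D s * h2 s.
Proof.
move=> [D0 _ Dsupp] le_h; apply: ler_sum => s _.
by case: (boolP (S s)) => Ss; [rewrite ler_wpM2l ?le_h | rewrite Dsupp ?mul0r].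
Qed.

Lemma expect_cst D (c : R) : is_distr S D -> \sum_s D s * c = c.
Proof. by move=> [_ D1 _]; rewrite -mulr_suml D1 mul1r. Qed.

Lemma push_distr T D : (forall s, S s -> S (T s)) -> is_distr S D ->
  is_distr S (push T D).
Proof.
move=> T_feas Dd; have [D0 D1 Dsupp] := Dd; split.
- by move=> s; rewrite ffunE sumr_ge0.
- transitivity (\sum_s push T D s * 1); first by apply: eq_bigr => s _; rewrite mulr1.
  by rewrite (push_expect T D (fun _ => 1)) expect_cst.
- move=> s Ss; rewrite ffunE; apply: big1 => r /eqP Trs.
  by apply: Dsupp; apply: contra Ss => /T_feas; rewrite Trs.
Qed.

Lemma sum_expA (X : {set U}) D :
  \sum_(u in X) expA A D u = \sum_s D s * \sum_(u in X) A s u.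
Proof. by rewrite exchange_big /=; apply: eq_bigr => s _; rewrite mulr_sumr. Qed.

Variable F : {ffun Sol -> R}.
Hypothesis F_fair : maxmin_fair S A F.

(* Indeed, the image of [F] under [T] dominates [F] on [X];
   by fairness it cannot strictly improve anyone in [X], so [F] already
   attains the maximal total value of [X]. *)
Lemma fair_down_closed_opt (X : {set U}) (T : Sol -> Sol) (M : R) :
  down_closed (expA A F) X ->
  (forall s, S s -> S (T s)) ->
  (forall s u, S s -> u \in X -> A s u <= A (T s) u) ->
  (forall s, S s -> \sum_(u in X) A s u <= M) ->
  (forall s, S s -> \sum_(u in X) A (T s) u = M) ->
  forall D, is_distr S D ->
  \sum_(u in X) expA A D u <= \sum_(u in X) expA A F u.
Proof.
move=> Xdown T_feas T_mono M_ub M_att D Dd.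
have [Fd fair] := F_fair; set F' := push T F.
have F'd : is_distr S F' by apply: push_distr.
have F_le u : u \in X -> expA A F u <= expA A F' u.
  by move=> uX; rewrite /expA push_expect; apply: expect_mono => // s Ss; apply: T_mono.
have F_eq u : u \in X -> expA A F u = expA A F' u.
  move=> uX; apply/le_anti; rewrite F_le //= leNgt; apply/negP => lt_u.
  have [v [lt_v le_vu]] := fair F' F'd u lt_u.
  by move: (F_le v (Xdown u v uX le_vu)); rewrite leNgt lt_v.
rewrite (eq_bigr _ F_eq) !sum_expA push_expect.
rewrite [X in _ <= X](eq_bigr (fun s => F s * M)); last first.
  move=> s _; case: (boolP (S s)) => Ss; first by rewrite M_att.
  by have [_ _ ->] := Fd; rewrite ?mul0r.
rewrite expect_cst // -(expect_cst M Dd); exact: expect_mono.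
Qed.
End MaxminFair.

Section RankingFairness.
Variables (R : realType) (n t : nat) (grp : 'I_n -> 'I_t) (ub : nat -> 'I_t -> int).
Variables (f : nat -> R) (g : 'I_n -> R).
Hypothesis f_noninc :
  forall i j : nat, (1 <= i)%N -> (i <= j)%N -> (j <= n)%N -> f j <= f i.

Local Notation feasible := (feasible grp ub).
Local Notation V := (Vfun f g).

Lemma improve_value_mono (X : {set 'I_n}) r w : feasible r -> w \in X ->
  V r w <= V (improve grp ub X r) w.
Proof.
move=> Fr wX; have [_ le_r _] := improve_spec X Fr.
by rewrite /Vfun lerD2r f_noninc // ?ltnS ?le_r // ltn_ord.
Qed.

Lemma improve_optimal (X : {set 'I_n}) r r2 : feasible r -> feasible r2 ->
  \sum_(w in X) V r2 w <= \sum_(w in X) V (improve grp ub X r) w.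
Proof.
move=> Fr Fr2; have [Fi _ Li] := improve_spec X Fr.
rewrite /Vfun !sumrB lerD2r.
exact: (pcnt_dom_sum_f f_noninc (locopt_dom Fi Li Fr2)).
Qed.

Hypothesis S_nonempty : exists r : {perm 'I_n}, feasible r.
Variable F : {ffun {perm 'I_n} -> R}.
Hypothesis F_fair : maxmin_fair feasible V F.

Lemma fair_level_set_opt (X : {set 'I_n}) : down_closed (expA V F) X ->
  forall D, is_distr feasible D ->
  \sum_(u in X) expA V D u <= \sum_(u in X) expA V F u.
Proof.
move=> Xdown; have [r0 Fr0] := S_nonempty.
set M := \sum_(w in X) V (improve grp ub X r0) w.
have M_ub s : feasible s -> \sum_(w in X) V s w <= M by move/(improve_optimal X Fr0).
apply: (fair_down_closed_opt F_fair Xdown (T := improve grp ub X) (M := M))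
  => // [s Fs|s u Fs uX|s Fs].
- by have [] := improve_spec X Fs.
- exact: improve_value_mono.
have [Fi _ _] := improve_spec X Fs.
have [Fi0 _ _] := improve_spec X Fr0.
by apply/le_anti; rewrite M_ub //=; apply: improve_optimal.
Qed.
End RankingFairness.

Lemma chord_bound (R : realFieldType) (a b x w c K N : R) :
  a <= b -> a + w <= b + c * N -> N * x <= K * w -> 1 <= K -> K <= N ->
  a + x <= b + c * K.
Proof.
move=> ab aw xw K1 KN; have N0 : 0 < N by apply: lt_le_trans KN; apply: lt_le_trans K1.
have e1 : K * w <= K * (b + c * N - a).
  by apply: ler_wpM2l; [apply: le_trans K1 | lra].
have e2 : (N - K) * a <= (N - K) * b by apply: ler_wpM2l; rewrite ?subr_ge0.
by rewrite -(ler_pM2l N0); lra.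
Qed.

Section Lorenz.
Variables (R : realType) (T : finType).

Definition lorenz (y : T -> R) (m : nat) : R :=
  \sum_(j < m) nth 0 (sort <=%R [seq y u | u <- enum T]) j.

Section OneProfile.
Variable y : T -> R.

Lemma lower_set (s : seq T) (k : nat) : uniq s -> (k <= size s)%N ->
  exists X : {set T}, [/\ #|X| = k, {subset X <= s},
    (forall u v, u \in X -> v \in s -> v \notin X -> y u <= y v) &
    \sum_(j < k) nth 0 (sort <=%R (map y s)) j = \sum_(u in X) y u].
Proof.
move=> us ks; set zs := sort (relpre y <=%R) s.
have pz : perm_eq zs s by rewrite perm_sort.
have uz : uniq zs by rewrite sort_uniq.
have sz : size zs = size s by rewrite size_sort.
have sorted_zs : sorted (relpre y <=%R) zs.
  by apply: sort_sorted => a b /=; apply: le_total.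
exists [set u | u \in take k zs]; split.
- by rewrite cardsE (card_uniqP (take_uniq k uz)) size_takel // sz.
- by move=> u; rewrite inE => /mem_take; rewrite (perm_mem pz).
- move=> u v; rewrite !inE => ut vs vt.
  have uz' : u \in zs by apply: mem_take ut.
  have vz : v \in zs by rewrite (perm_mem pz).
  rewrite (in_take _ vz) -leqNgt in vt.
  rewrite -(nth_index u uz') -(nth_index u vz).
  have y_trans : transitive (relpre y <=%R) by move=> a b c /=; apply: le_trans.
  apply: (sorted_leq_nth y_trans _ u sorted_zs); rewrite ?inE ?index_mem //.
    by move=> a /=.
  exact: ltnW (leq_trans (index_ltn ut) vt).
- rewrite sort_map -/zs.
  case: k ks => [|k] ks; first by rewrite big_ord0 big_pred0 // => u; rewrite inE take0.
  have [x0 _] : exists x0 : T, true by case: (s) ks => [|a s'] //= _; exists a.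
  transitivity (\sum_(u <- take k.+1 zs) y u); last first.
    by rewrite big_uniq ?take_uniq //; apply: eq_bigl => u; rewrite inE.
  rewrite (big_nth x0) size_takel ?sz // big_mkord; apply: eq_bigr => j _.
  by rewrite (nth_map x0) ?sz ?(leq_trans (ltn_ord j)) // nth_take.
Qed.

Lemma mean_le (A B : {set T}) : (forall a b, a \in A -> b \in B -> y a <= y b) ->
  #|B|%:R * \sum_(a in A) y a <= #|A|%:R * \sum_(b in B) y b.
Proof.
move=> le_AB; rewrite !mulr_sumr.
apply: (@le_trans _ _ (\sum_(a in A) \sum_(b in B) y b)).
  apply: ler_sum => a aA; rewrite mulr_natl -sumr_const.
  by apply: ler_sum => b bB; apply: le_AB.
by rewrite exchange_big /=; apply: ler_sum => b bB; rewrite sumr_const mulr_natl.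
Qed.

Lemma lower_set_min (X Y : {set T}) : #|X| = #|Y| ->
  (forall u v, u \in X -> v \notin X -> y u <= y v) ->
  \sum_(u in X) y u <= \sum_(u in Y) y u.
Proof.
move=> cXY lowX.
rewrite (big_setID Y) [X in _ <= X](big_setID X) /= setIC lerD2l.
have cD : #|X :\: Y| = #|Y :\: X|.
  by have := cardsID Y X; have := cardsID X Y; rewrite setIC; lia.
have := @mean_le (X :\: Y) (Y :\: X); rewrite cD => /(_ _) mean.
have {}mean : #|Y :\: X|%:R * \sum_(a in X :\: Y) y a <=
              #|Y :\: X|%:R * \sum_(b in Y :\: X) y b.
  by apply: mean => a b; rewrite !inE => /andP[_ aX] /andP[bX _]; apply: lowX.
have [c0|cp] := posnP #|Y :\: X|.
  have : #|X :\: Y| == 0%N by rewrite cD c0.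
  rewrite cards_eq0 => /eqP ->; move/eqP: c0; rewrite cards_eq0 => /eqP ->.
  by rewrite !big_set0.
by rewrite -(ler_pM2l (x := #|Y :\: X|%:R)) // ltr0n.
Qed.

Lemma lorenz_le_sum (X : {set T}) : lorenz y #|X| <= \sum_(u in X) y u.
Proof.
have kT : (#|X| <= size (enum T))%N by rewrite -cardT max_card.
have [L [cL _ lowL sumL]] := lower_set (enum_uniq T) kT.
rewrite /lorenz sumL; apply: lower_set_min => [|u v uL vL]; first exact: cL.
by apply: lowL; rewrite ?mem_enum.
Qed.

Lemma subset_mean_le (Y : {set T}) (k : nat) : (k <= #|Y|)%N ->
  exists X : {set T}, [/\ X \subset Y, #|X| = k &
    #|Y|%:R * \sum_(u in X) y u <= k%:R * \sum_(u in Y) y u].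
Proof.
move=> kY; have kY' : (k <= size (enum Y))%N by rewrite -cardE.
have [X [cX XY lowX _]] := lower_set (enum_uniq _) kY'.
have sXY : X \subset Y by apply/subsetP => u /XY; rewrite mem_enum.
exists X; split => //.
have mean : #|Y :\: X|%:R * \sum_(a in X) y a <= #|X|%:R * \sum_(b in Y :\: X) y b.
  apply: mean_le => a b aX; rewrite !inE => /andP[bX bY].
  by apply: lowX; rewrite ?mem_enum.
have cY : #|Y| = (#|Y :\: X| + k)%N.
  by have := cardsID X Y; rewrite (setIidPr sXY) cX; lia.
rewrite [Z in _ <= _ * Z](big_setID X) /= (setIC Y X) (setIidPl sXY) cY.
by rewrite natrD -cX mulrDl mulrDr [Z in _ <= Z]addrC lerD2r.
Qed.
End OneProfile.

(* Let [c] be the [m]-th smallest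
   value of [y], [Sl] and [Se] the sets where [y < c] and [y <= c].  On both,
   [z] sums to at most what [y] does; the [m] smallest values of [y] are
   those on [Sl] and [K] values equal to [c] on [Se :\: Sl], while [Sl]
   together with the [K] smallest values of [z] on [Se :\: Sl] is a set of
   size [m] on which [z] sums to at most [lorenz y m]. *)
Lemma lorenz_dom_of_down_closed (y z : T -> R) :
  (forall X, down_closed y X -> \sum_(u in X) z u <= \sum_(u in X) y u) ->
  forall m, (0 < m <= #|T|)%N -> lorenz z m <= lorenz y m.
Proof.
move=> level_dom m /andP[m0 mT].
have mT' : (m <= size (enum T))%N by rewrite -cardT.
have [XF [cXF _ lowF sumF]] := lower_set y (enum_uniq T) mT'.
have [u0 u0X] : exists u0, u0 \in XF by apply/card_gt0P; rewrite cXF.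
case: (@arg_maxP _ _ _ u0 (mem XF) y u0X) => us usX usmax; set c := y us.
pose Sl := [set u | y u < c]; pose Se := [set u | y u <= c]; pose Y := Se :\: Sl.
have SlX : Sl \subset XF.
  apply/subsetP => u; rewrite inE => yu; apply/negPn/negP => uX.
  by have := lowF us u usX (mem_enum _ _) uX; rewrite leNgt yu.
have yY u : u \in Y -> y u = c.
  by rewrite !inE => /andP[h1 h2]; apply/le_anti; rewrite h2 leNgt h1.
have SlSe : Sl \subset Se by apply/subsetP => u; rewrite !inE => /ltW.
have sumSe (h : T -> R) : \sum_(u in Se) h u = \sum_(u in Sl) h u + \sum_(u in Y) h u.
  by rewrite (big_setID Sl) /= (setIidPr SlSe).
set K := #|XF :\: Sl|.
have cm : m = (#|Sl| + K)%N.
  by have := cardsID Sl XF; rewrite (setIidPr SlX) cXF.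
have XSlY : XF :\: Sl \subset Y.
  by apply/subsetP => u; rewrite !inE => /andP[-> uX]; apply: usmax.
have sumXF : lorenz y m = \sum_(u in Sl) y u + c * K%:R.
  rewrite /lorenz sumF (big_setID Sl) /= (setIidPr SlX) mulr_natr -sumr_const.
  by congr (_ + _); apply: eq_bigr => u /(subsetP XSlY) /yY.
have [X' [X'Y cX' meanX']] := subset_mean_le z (subset_leq_card XSlY).
have X'Sl : [disjoint X' & Sl].
  rewrite disjoints_subset; apply/subsetP => u uX'.
  by have := subsetP X'Y u uX'; rewrite !inE => /andP[].
have sumX : lorenz z m <= \sum_(u in Sl) z u + \sum_(u in X') z u.
  have cX : #|Sl :|: X'| = m.
    by rewrite cardsU setIC (disjoint_setI0 X'Sl) cards0 subn0 cX' cm.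
  rewrite -cX; apply: le_trans (lorenz_le_sum z (Sl :|: X')) _.
  by rewrite (big_setID Sl) /= setUK setDUl setDv set0U (setDidPl X'Sl).
apply: le_trans sumX _; rewrite sumXF.
apply: (chord_bound (w := \sum_(u in Y) z u) (N := #|Y|%:R)).
- by apply: level_dom => u v; rewrite !inE => h1 h2; apply: le_lt_trans h2 h1.
- move: (level_dom Se); rewrite !sumSe.
  rewrite (eq_bigr (fun=> c) yY) sumr_const mulr_natr; apply => u v.
  by rewrite !inE => h1 h2; apply: le_trans h2 h1.
- exact: meanX'.
- by rewrite ler1n card_gt0; apply/set0Pn; exists us; rewrite !inE /c ltxx.
- by rewrite ler_nat subset_leq_card.
Qed.
End Lorenz.

Theorem theorem2 (R : realType) (n t : nat) (grp : 'I_n -> 'I_t)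
  (ub : nat -> 'I_t -> int)
  (rel : 'I_n -> R) (rel_inj : injective rel)
  (f : nat -> R)
  (f_noninc : forall i j : nat, (1 <= i)%N -> (i <= j)%N -> (j <= n)%N -> f j <= f i)
  (g : 'I_n -> R)
  (g_mono : forall u v : 'I_n, rel v <= rel u -> g v <= g u)
  (S_nonempty : exists r : {perm 'I_n}, feasible grp ub r)
  (F : {ffun {perm 'I_n} -> R})
  (F_fair : maxmin_fair (feasible grp ub) (Vfun f g) F) :
  forall D : {ffun {perm 'I_n} -> R}, is_distr (feasible grp ub) D ->
  forall m : nat, (1 <= m <= n)%N ->
    lorenz_sum (Vfun f g) D m <= lorenz_sum (Vfun f g) F m.
Proof.
move=> D Dd m m_n.
apply: (@lorenz_dom_of_down_closed _ _ (expA (Vfun f g) F) (expA (Vfun f g) D));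
  last by rewrite card_ord.
by move=> X Xdown; apply: (fair_level_set_opt f_noninc S_nonempty F_fair Xdown).
Qed.
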